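(* Let $\mathbb F$ be a field of characteristic $2$, let $m\ge1$, and let $\mathfrak h_m$ be the Heisenberg Lie algebra over $\mathbb F$ with basis $e_1,\dots,e_{2m+1}$ and only nonzero brackets $[e_i,e_{m+i}]=-[e_{m+i},e_i]=e_{2m+1}$ for $1\le i\le m$. For $\lambda=(\lambda_1,\dots,\lambda_{2m+1})\in\mathbb F^{2m+1}$ let $\mathfrak h_m^\lambda(2)$ denote $\mathfrak h_m$ with the restricted structure given by the $[2]$-operator $$\left(\sum_{i=1}^{2m+1}a_ie_i\right)^{[2]}=\left(\sum_{i=1}^{2m+1}a_i^2\lambda_i+\sum_{j=1}^{m}a_ja_{m+j}\right)e_{2m+1}$$ (i.e. the unique $[2]$-operator with $e_i^{[2]}=\lambda_ie_{2m+1}$). Let $\lambda,\lambda'\in\mathbb F^{2m+1}$. Then $\mathfrak h_m^\lambda(2)$ and $\mathfrak h_m^{\lambda'}(2)$ are isomorphic as restricted Lie algebras if and only if there exist an invertible matrix $A\in\mathbb F^{2m\times2m}$, a vector $k=(k_1,\dots,k_{2m})\in\mathbb F^{2m}$ and a scalar $\mu\in\mathbb F$ with $(\det A)^2=\mu^{2m}$ such that (1) $A\begin{pmatrix}0&I_m\\-I_m&0\end{pmatrix}A^{t}=\mu\begin{pmatrix}0&I_m\\-I_m&0\end{pmatrix}$; (2') for every row vector $a=(a_1,\dots,a_{2m})\in\mathbb F^{2m}$, $$\mu\, a\Big(\sum_{i=1}^{2m}\lambda_iE_{ii}\Big)a^{T}+\mu\, a_{\mathrm I}a_{\mathrm{II}}^{T}=aA\Big(\sum_{i=1}^{2m}\lambda'_iE_{ii}\Big)(aA)^{T}+(aA)_{\mathrm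 I}(aA)_{\mathrm{II}}^{T}+\lambda'_{2m+1}(ak^{T})^2;$$ (3) $\lambda_{2m+1}=\mu\,\lambda'_{2m+1}$.
   Context: For $a=(a_1,\dots,a_{2m})\in\mathbb F^{2m}$, $a_{\mathrm I}=(a_1,\dots,a_m)$ and $a_{\mathrm{II}}=(a_{m+1},\dots,a_{2m})$. $E_{ii}$ is the $2m\times2m$ matrix with a single nonzero entry $1$ in position $(i,i)$. $I_m$ is the $m\times m$ identity matrix, and $^t$, $^T$ denote transpose. A restricted Lie algebra isomorphism is a Lie algebra isomorphism $\Psi$ with $\Psi(g^{[2]})=\Psi(g)^{[2]'}$ for all $g$. *)

From HB Require Import structures.
From mathcomp Require Import all_boot all_order all_algebra.
Set Implicit Arguments. Unset Strict Implicit. Unset Printing Implicit Defensive.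
Import Order.TTheory GRing.Theory Num.Theory.
Local Open Scope ring_scope.

(* The Heisenberg Lie algebra h_m over F, realised on row vectors of length
   2m+1 = (m+m)+1; coordinate vector x stands for sum_i x_i e_i.
   Index conventions: e_j (1<=j<=m) is hidx1 j, e_{m+j} is hidx2 j,
   e_{2m+1} is hlast. *)
Definition hidx1 (m : nat) (j : 'I_m) : 'I_(m + m + 1) := lshift 1 (lshift m j).
Definition hidx2 (m : nat) (j : 'I_m) : 'I_(m + m + 1) := lshift 1 (rshift m j).
Definition hlast (m : nat) : 'I_(m + m + 1) := rshift (m + m) ord0.

Definition hbasis (F : fieldType) (m : nat) (i : 'I_(m + m + 1)) : 'rV[F]_(m + m + 1) :=
  delta_mx ord0 i.

Definition heis_bracket (F : fieldType) (m : nat) (x y : 'rV[F]_(m + m + 1))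
  : 'rV[F]_(m + m + 1) :=
  (\sum_(j < m) (x ord0 (hidx1 j) * y ord0 (hidx2 j)
                 - x ord0 (hidx2 j) * y ord0 (hidx1 j))) *: hbasis F (hlast m).

Definition heis_p2 (F : fieldType) (m : nat) (lam : 'rV[F]_(m + m + 1))
  (x : 'rV[F]_(m + m + 1)) : 'rV[F]_(m + m + 1) :=
  (\sum_(i < m + m + 1) x ord0 i ^+ 2 * lam ord0 i
   + \sum_(j < m) x ord0 (hidx1 j) * x ord0 (hidx2 j)) *: hbasis F (hlast m).

Definition restricted_iso (F : fieldType) (m : nat) (lam lam' : 'rV[F]_(m + m + 1))
  (f : 'rV[F]_(m + m + 1) -> 'rV[F]_(m + m + 1)) : Prop :=
  [/\ (forall (c : F) (x y : 'rV[F]_(m + m + 1)), f (c *: x + y) = c *: f x + f y),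
      bijective f,
      (forall x y, f (heis_bracket x y) = heis_bracket (f x) (f y)) &
      (forall x, f (heis_p2 lam x) = heis_p2 lam' (f x))].

Definition restricted_isomorphic (F : fieldType) (m : nat) (lam lam' : 'rV[F]_(m + m + 1))
  : Prop := exists f, restricted_iso lam lam' f.

Definition Jm (F : fieldType) (m : nat) : 'M[F]_(m + m) :=
  block_mx 0 1%:M (- 1%:M) 0.

Definition lam_head (F : fieldType) (m : nat) (lam : 'rV[F]_(m + m + 1)) : 'rV[F]_(m + m) :=
  \row_(i < m + m) lam ord0 (lshift 1 i).

From HB Require Import structures.
From mathcomp Require Import all_boot all_order all_algebra.
From mathcomp Require Import ring.
Import GRing.Theory.
Set Implicit Arguments. Unset Strict Implicit. Unset Printing Implicit Defensive.
Local Open Scope ring_scope.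

(* A linear map is right multiplication by a matrix M.  The last basis vector
   z = e_(2m+1) is a bracket, so M maps the line F z into itself and M has the
   block form [[A, k^T], [0, mu]].  The bracket of (a, c) and (b, d) is
   (a J b^T) z, so M preserves brackets iff A J A^T = mu J, which also gives
   (det A)^2 = mu^(2m) on taking determinants.  The [2]-map is a quadratic form
   times z; its preservation at (a, c) involves (a k^T + mu c)^2, which in
   characteristic 2 splits as (a k^T)^2 + mu^2 c^2, so for mu <> 0 it is
   equivalent to the case c = 0, which is (2'), together with the case a = 0,
   which is (3). *)

Lemma mul_rV_lin1_linear (F : fieldType) (n p : nat) (f : 'rV[F]_n -> 'rV[F]_p) :
  linear f -> f =1 mulmxr (lin1_mx f).
Proof.
move=> lin_f u.
pose fL : {linear 'rV[F]_n -> 'rV[F]_p} := HB.pack f (GRing.isLinear.Build _ _ _ _ f lin_f).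
by rewrite /= (mul_rV_lin1 fL).
Qed.

Lemma mulmxr_bijective (F : fieldType) (n : nat) (M : 'M[F]_n) :
  bijective (mulmxr M : 'rV[F]_n -> 'rV[F]_n) <-> M \in unitmx.
Proof.
split=> [[g _ gK] | Mu]; last first.
  by exists (mulmxr (invmx M)) => x /=; rewrite ?mulmxK ?mulmxKV.
rewrite -row_full_unit; apply/row_fullP.
exists (\matrix_i g (row i 1%:M)); apply/row_matrixP => i.
by rewrite row_mul rowK [LHS]gK.
Qed.

Definition bform (R : comPzRingType) (n : nat) (X : 'M[R]_n) (a b : 'rV[R]_n) : R :=
  (a *m X *m b^T) 0 0.

Lemma bform_delta (R : comPzRingType) (n : nat) (X : 'M[R]_n) i j :
  bform X (delta_mx 0 i) (delta_mx 0 j) = X i j.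
Proof. by rewrite /bform -rowE trmx_delta -colE !mxE. Qed.

Lemma bformZ (R : comPzRingType) (n : nat) (c : R) (X : 'M[R]_n) a b :
  bform (c *: X) a b = c * bform X a b.
Proof. by rewrite /bform -scalemxAr -scalemxAl mxE. Qed.

Lemma bform_mulmx (R : comPzRingType) (n : nat) (X A : 'M[R]_n) a b :
  bform X (a *m A) (b *m A) = bform (A *m X *m A^T) a b.
Proof. by rewrite /bform trmx_mul !mulmxA. Qed.

Lemma bform_inj (R : comPzRingType) (n : nat) (X Y : 'M[R]_n) :
  (forall a b, bform X a b = bform Y a b) -> X = Y.
Proof. by move=> XY; apply/matrixP => i j; rewrite -!bform_delta XY. Qed.

Section HeisenbergMatrices.

Variables (F : fieldType) (m : nat).

Local Notation z := (hbasis F (hlast m)).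

Definition heis_quad (lam : 'rV[F]_(m + m + 1)) (a : 'rV[F]_(m + m)) : F :=
  bform (diag_mx (lam_head lam)) a a + (lsubmx a *m (rsubmx a)^T) 0 0.

Definition heis_mx (A : 'M[F]_(m + m)) (k : 'rV[F]_(m + m)) (mu : F) : 'M[F]_(m + m + 1) :=
  block_mx A k^T 0 mu%:M.

Lemma hbasis_hlast : z = row_mx 0 1%:M.
Proof.
rewrite /hbasis /hlast delta_mx_rshift; congr row_mx.
by apply/matrixP => i j; rewrite !ord1 !mxE.
Qed.

Lemma scale_hbasis_inj : injective (fun s : F => s *: z).
Proof.
move=> s t /(congr1 (fun v : 'rV[F]_(m + m + 1) => v 0 (hlast m))).
by rewrite !mxE !eqxx !mulr1.
Qed.

Lemma heis_bracket_row_mx (a b : 'rV[F]_(m + m)) (c d : 'rV[F]_1) :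
  heis_bracket (row_mx a c) (row_mx b d) = bform (Jm F m) a b *: z.
Proof.
rewrite /heis_bracket /bform; congr (_ *: _).
rewrite -[a]hsubmxK -[b]hsubmxK.
move: (lsubmx a) (rsubmx a) (lsubmx b) (rsubmx b) => a1 a2 b1 b2.
rewrite /Jm mul_row_block !mulmx0 mulmxN !mulmx1 add0r addr0.
rewrite tr_row_mx mul_row_col !mxE sumrB addrC -sumrN /hidx1 /hidx2.
by congr (_ + _); apply: eq_bigr => j _; rewrite !(row_mxEl, row_mxEr, mxE) ?mulNr.
Qed.

Lemma heis_p2_row_mx (lam : 'rV[F]_(m + m + 1)) (a : 'rV[F]_(m + m)) (c : 'rV[F]_1) :
  heis_p2 lam (row_mx a c)
  = (heis_quad lam a + lam 0 (hlast m) * c 0 0 ^+ 2) *: z.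
Proof.
rewrite /heis_p2 /heis_quad /bform; congr (_ *: _).
rewrite big_split_ord /= big_ord1 [LHS]addrAC; congr (_ + _ + _).
- rewrite [RHS]mxE; apply: eq_bigr => i _.
  by rewrite row_mxEl mul_mx_diag !mxE; ring.
- by rewrite [RHS]mxE; apply: eq_bigr => j _; rewrite /hidx1 /hidx2 !row_mxEl !mxE.
- by rewrite /hlast row_mxEr mulrC.
Qed.

Lemma heis_bracket_basis (j : 'I_m) :
  heis_bracket (hbasis F (hidx1 j)) (hbasis F (hidx2 j)) = z.
Proof.
rewrite /hbasis /hidx1 /hidx2 (delta_mx_lshift F 1 0 (lshift m j)).
by rewrite (delta_mx_lshift F 1 0 (rshift m j)) heis_bracket_row_mx bform_delta
  block_mxEur mxE eqxx scale1r.
Qed.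

Lemma heis_center_image (f : 'rV[F]_(m + m + 1) -> 'rV[F]_(m + m + 1)) :
  (0 < m)%N -> (forall x y, f (heis_bracket x y) = heis_bracket (f x) (f y)) ->
  exists nu, f z = nu *: z.
Proof.
move=> m_gt0 f_bracket.
by rewrite -{1}(heis_bracket_basis (Ordinal m_gt0)) f_bracket; eexists.
Qed.

Lemma mul_row_heis_mx A k mu (a : 'rV[F]_(m + m)) (c : 'rV[F]_1) :
  row_mx a c *m heis_mx A k mu = row_mx (a *m A) (a *m k^T + mu *: c).
Proof. by rewrite mul_row_block mulmx0 addr0 mul_mx_scalar. Qed.

Lemma mul_hbasis_heis_mx A k mu : z *m heis_mx A k mu = mu *: z.
Proof.
by rewrite hbasis_hlast mul_row_heis_mx !mul0mx add0r scale_row_mx scaler0 scalemx1.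
Qed.

Lemma heis_mx_of_center (M : 'M[F]_(m + m + 1)) nu :
  z *m M = nu *: z -> M = heis_mx (ulsubmx M) (ursubmx M)^T nu.
Proof.
rewrite -{1}[M]submxK hbasis_hlast mul_row_block !mul0mx !add0r !mul1mx.
rewrite scale_row_mx scaler0 scalemx1 => /eq_row_mx [dl0 dr_nu].
by rewrite /heis_mx trmxK -dl0 -dr_nu submxK.
Qed.

Lemma heis_mx_unit A k mu :
  (heis_mx A k mu \in unitmx) = (A \in unitmx) && (mu != 0).
Proof. by rewrite !unitmxE det_ublock det_scalar expr1 !unitfE mulf_eq0 negb_or. Qed.

Lemma heis_mx_bracketP A k mu :
  (forall x y, heis_bracket x y *m heis_mx A k mu
               = heis_bracket (x *m heis_mx A k mu) (y *m heis_mx A k mu))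
  <-> A *m Jm F m *m A^T = mu *: Jm F m.
Proof.
have bracketE a b (c d : 'rV[F]_1) :
    (heis_bracket (row_mx a c) (row_mx b d) *m heis_mx A k mu
     = heis_bracket (row_mx a c *m heis_mx A k mu) (row_mx b d *m heis_mx A k mu))
    <-> bform (mu *: Jm F m) a b = bform (A *m Jm F m *m A^T) a b.
  rewrite !mul_row_heis_mx !heis_bracket_row_mx -scalemxAl mul_hbasis_heis_mx.
  rewrite scalerA bformZ bform_mulmx mulrC.
  by split=> [/scale_hbasis_inj | ->].
split=> [AJ | AJ x y].
  apply/esym/bform_inj => a b.
  by apply/(bracketE a b 0 0); rewrite AJ.
by rewrite -[x]hsubmxK -[y]hsubmxK; apply/bracketE; rewrite AJ.
Qed.

Lemma heis_mx_p2P (lam lam' : 'rV[F]_(m + m + 1)) A k mu :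
  2%N \in [pchar F] -> mu != 0 ->
  (forall x, heis_p2 lam x *m heis_mx A k mu = heis_p2 lam' (x *m heis_mx A k mu))
  <-> (forall a, mu * heis_quad lam a
                 = heis_quad lam' (a *m A) + lam' 0 (hlast m) * (a *m k^T) 0 0 ^+ 2)
      /\ lam 0 (hlast m) = mu * lam' 0 (hlast m).
Proof.
move=> pchar2 mu0.
have p2E a (c : 'rV[F]_1) :
    (heis_p2 lam (row_mx a c) *m heis_mx A k mu
     = heis_p2 lam' (row_mx a c *m heis_mx A k mu))
    <-> (heis_quad lam a + lam 0 (hlast m) * c 0 0 ^+ 2) * mu
        = heis_quad lam' (a *m A)
          + lam' 0 (hlast m) * ((a *m k^T) 0 0 + mu * c 0 0) ^+ 2.
  rewrite mul_row_heis_mx !heis_p2_row_mx -scalemxAl mul_hbasis_heis_mx scalerA.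
  rewrite [(_ + mu *: c) 0 0]mxE [(mu *: c) 0 0]mxE.
  by split=> [/scale_hbasis_inj | ->].
have quad0 lam1 : heis_quad lam1 0 = 0.
  by rewrite /heis_quad /bform !mul0mx linear0 !mul0mx !mxE addr0.
split=> [p2 | [quadA lamE] x].
  split=> [a | ].
    have /(p2E a 0) := p2 (row_mx a 0).
    by rewrite mxE expr0n !mulr0 !addr0 mulrC.
  have /(p2E 0 1%:M) := p2 (row_mx 0 1%:M).
  rewrite !mul0mx !quad0 !mxE eqxx mulr1n !add0r expr1n mulr1 => lamE.
  by apply: (mulIf mu0); rewrite lamE; ring.
rewrite -[x]hsubmxK; apply/p2E.
rewrite sqrrD (mulrn_pchar pchar2) addr0 mulrDl [_ * mu]mulrC quadA lamE.
ring.
Qed.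

Lemma Jm_unit : Jm F m \in unitmx.
Proof.
suff JJ : Jm F m *m (- Jm F m) = 1%:M by case: (mulmx1_unit JJ).
rewrite mulmxN /Jm mulmx_block !mulmx0 !mul0mx !mulmx1 !mul1mx !addr0 !add0r.
by rewrite opp_block_mx !oppr0 opprK [RHS](scalar_mx_block m m).
Qed.

Lemma det_sympl_similitude (A : 'M[F]_(m + m)) mu :
  A *m Jm F m *m A^T = mu *: Jm F m -> \det A ^+ 2 = mu ^+ (m + m).
Proof.
have detJ : \det (Jm F m) != 0 by rewrite -unitfE -unitmxE Jm_unit.
move/(congr1 determinant); rewrite !det_mulmx det_tr detZ => detAJ.
by apply: (mulIf detJ); rewrite -detAJ; ring.
Qed.

Lemma heis_iso_mx (f : 'rV[F]_(m + m + 1) -> 'rV[F]_(m + m + 1)) :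
  (0 < m)%N -> linear f ->
  (forall x y, f (heis_bracket x y) = heis_bracket (f x) (f y)) ->
  exists A k mu, f =1 mulmxr (heis_mx A k mu).
Proof.
move=> m_gt0 lin_f f_bracket.
have fM := mul_rV_lin1_linear lin_f.
have [nu fz] := heis_center_image m_gt0 f_bracket.
have zM : z *m lin1_mx f = nu *: z by rewrite -fz fM.
exists (ulsubmx (lin1_mx f)), (ursubmx (lin1_mx f))^T, nu.
by rewrite -(heis_mx_of_center zM).
Qed.

Lemma eq_restricted_iso (lam lam' : 'rV[F]_(m + m + 1)) f g :
  f =1 g -> restricted_iso lam lam' f -> restricted_iso lam lam' g.
Proof.
move=> fg [lin_f bij_f brk_f p2_f].
by split=> [c x y | | x y | x]; rewrite -?fg //; apply: eq_bij fg.
Qed.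

Lemma restricted_iso_heis_mx (lam lam' : 'rV[F]_(m + m + 1)) A k mu :
  2%N \in [pchar F] ->
  restricted_iso lam lam' (mulmxr (heis_mx A k mu)) <->
  [/\ A \in unitmx, mu != 0, A *m Jm F m *m A^T = mu *: Jm F m,
      forall a, mu * heis_quad lam a
                = heis_quad lam' (a *m A) + lam' 0 (hlast m) * (a *m k^T) 0 0 ^+ 2
    & lam 0 (hlast m) = mu * lam' 0 (hlast m)].
Proof.
move=> pchar2; split=> [[_ bij brk p2] | [Au mu0 AJ quadA lamE]].
  have /andP[Au mu0] : (A \in unitmx) && (mu != 0).
    by rewrite -(heis_mx_unit A k); apply/mulmxr_bijective.
  have [quadA lamE] := (heis_mx_p2P lam lam' A k pchar2 mu0).1 p2.
  by split=> //; apply/(heis_mx_bracketP A k).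
split=> [c x y | | | ] /=.
- by rewrite mulmxDl scalemxAl.
- by apply/mulmxr_bijective; rewrite heis_mx_unit Au.
- exact/heis_mx_bracketP.
- exact/heis_mx_p2P.
Qed.

End HeisenbergMatrices.

Theorem theorem3p2 (F : fieldType) (m : nat) (lam lam' : 'rV[F]_(m + m + 1)) :
  (2%N \in [pchar F]) -> (0 < m)%N ->
  restricted_isomorphic lam lam' <->
  exists (A : 'M[F]_(m + m)) (k : 'rV[F]_(m + m)) (mu : F),
    [/\ A \in unitmx,
        (\det A) ^+ 2 = mu ^+ (m + m),
        A *m Jm F m *m A^T = mu *: Jm F m,
        (forall a : 'rV[F]_(m + m),
            mu * (a *m diag_mx (lam_head lam) *m a^T) ord0 ord0
            + mu * (lsubmx a *m (rsubmx a)^T) ord0 ord0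
          = ((a *m A) *m diag_mx (lam_head lam') *m (a *m A)^T) ord0 ord0
            + (lsubmx (a *m A) *m (rsubmx (a *m A))^T) ord0 ord0
            + lam' ord0 (hlast m) * ((a *m k^T) ord0 ord0) ^+ 2) &
        lam ord0 (hlast m) = mu * lam' ord0 (hlast m)].
Proof.
move=> pchar2 m_gt0; split=> [[f iso] | [A [k [mu [Au detA AJ quadA lamE]]]]].
  have [lin_f _ brk_f _] := iso.
  have [A [k [mu fM]]] := heis_iso_mx m_gt0 lin_f brk_f.
  have /restricted_iso_heis_mx[// | Au mu0 AJ quadA lamE] := eq_restricted_iso fM iso.
  exists A, k, mu; split=> //; first exact: det_sympl_similitude.
  by move=> a; rewrite -mulrDr quadA.
have mu0 : mu != 0.
  apply: contraTneq Au => mu0.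
  have : \det A ^+ 2 == 0 by rewrite detA mu0 expr0n addn_eq0 (gtn_eqF m_gt0).
  by rewrite expf_eq0 unitmxE unitfE negbK => /andP[].
exists (mulmxr (heis_mx A k mu)); apply/restricted_iso_heis_mx => //.
by split=> // a; rewrite /heis_quad mulrDr quadA.
Qed.
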